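(* Let $A$ be a closed type of system $\mathcal F$ not containing the type constant $O$. If $A$ is a data type, then $A$ is an output type.
   Context: $\lambda$-terms are those of the untyped $\lambda$-calculus ($\Lambda$ their set); $Fv(t)$ the free variables; $\rightarrow_\beta$ is (multi-step) $\beta$-reduction; normal means without $\beta$-redex; $u\succ_f v$ means $v$ is obtained from $u$ by weak head reduction (repeatedly reducing the redex $(\lambda x u)v$ in a term $(\lambda x u)vv_1\dots v_m$). Types of system $\mathcal F$: built from type variables and type constants (atomic, not quantifiable; $O$ is one) with $\rightarrow$, $\forall$; only proper types (in every $\forall XA$, $X$ occurs free in $A$). Typing: (ax) $\Gamma \vdash x_i : A_i$ for $x_i:A_i\in\Gamma$; ($\rightarrow_i$) from $\Gamma, x:B \vdash t : C$ infer $\Gamma \vdash \lambda x t : B \rightarrow C$; ($\rightarrow_e$) from $\Gamma \vdash u : B\rightarrow C$, $\Gamma \vdash v : B$ infer $\Gamma \vdash (u)v : C$; ($\forall_i$) from $\Gamma \vdash t : A$, $X$ not free in $\Gamma$, infer $\Gamma \vdash t : \forall X A$; ($\forall_e$) from $\Gamma \vdash t : \forall X A$ infer $\Gamma \vdash t : A[C/X]$. A set $G\subseteq\Lambda$ is saturated if $u\in G$ and $t\succ_f u$ imply $t\in G$. For $G,G'\subseteq\Lambda$, $G\rightarrow G'=\{u : (u)t\in G' \text{ for all } t\in G\}$. An interpretation $I$ maps each type variable and type constant to a saturated set; $|A|_I$ is defined by $|A\rightarrow B|_I=|A|_I\rightarrow|B|_I$ and $|\forall XA|_I=\bigcap\{|A|_{I[X\leftarrow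 G]} : G \text{ saturated}\}$, and $|A|=\bigcap_I |A|_I$. A closed type $A$ is a data type if $|A|\neq\emptyset$ and every $t\in|A|$ $\beta$-reduces to a closed term. An output type is a closed type $S$ not containing $O$ such that for every normal $t$ and variable $\alpha$, $\alpha:O\vdash_{\mathcal F}t:S$ implies $\alpha\notin Fv(t)$. *)

From Stdlib Require Import List Arith Relations.
Import ListNotations.

Inductive term : Type :=
| Var : nat -> term
| App : term -> term -> term
| Lam : term -> term.

Fixpoint lift_by (n c : nat) (t : term) : term :=
  match t with
  | Var i => if Nat.ltb i c then Var i else Var (i + n)
  | App a b => App (lift_by n c a) (lift_by n c b)
  | Lam a => Lam (lift_by n (S c) a)
  end.

Fixpoint subst (k : nat) (u : term) (t : term) : term :=
  match t with
  | Var i => if Nat.ltb i k then Var i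
             else if Nat.eqb i k then lift_by k 0 u
             else Var (pred i)
  | App a b => App (subst k u a) (subst k u b)
  | Lam a => Lam (subst (S k) u a)
  end.

Fixpoint occurs (k : nat) (t : term) : Prop :=
  match t with
  | Var i => i = k
  | App a b => occurs k a \/ occurs k b
  | Lam a => occurs (S k) a
  end.

Definition closed_term (t : term) : Prop := forall k, ~ occurs k t.

Inductive beta1 : term -> term -> Prop :=
| beta_redex : forall t u, beta1 (App (Lam t) u) (subst 0 u t)
| beta_appl : forall a a' b, beta1 a a' -> beta1 (App a b) (App a' b)
| beta_appr : forall a b b', beta1 b b' -> beta1 (App a b) (App a b')
| beta_lam : forall a a', beta1 a a' -> beta1 (Lam a) (Lam a').

Definition beta_star : term -> term -> Prop := clos_refl_trans term beta1.

Fixpoint has_redex (t : term) : Prop :=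
  match t with
  | Var _ => False
  | App (Lam a) b => True
  | App a b => has_redex a \/ has_redex b
  | Lam a => has_redex a
  end.

Definition normal (t : term) : Prop := ~ has_redex t.

Inductive wh1 : term -> term -> Prop :=
| wh_redex : forall u v, wh1 (App (Lam u) v) (subst 0 v u)
| wh_app : forall t t' w, wh1 t t' -> wh1 (App t w) (App t' w).

Definition wh_red : term -> term -> Prop := clos_refl_trans term wh1.

Inductive ty : Type :=
| TVar : nat -> ty
| TConst : nat -> ty
| Arr : ty -> ty -> ty
| All : ty -> ty.

Definition O : ty := TConst 0.

Fixpoint tlift_by (n c : nat) (A : ty) : ty :=
  match A with
  | TVar i => if Nat.ltb i c then TVar i else TVar (i + n)
  | TConst a => TConst a
  | Arr B C => Arr (tlift_by n c B) (tlift_by n c C)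
  | All B => All (tlift_by n (S c) B)
  end.

Definition tlift (A : ty) : ty := tlift_by 1 0 A.

Fixpoint tsubst (k : nat) (C : ty) (A : ty) : ty :=
  match A with
  | TVar i => if Nat.ltb i k then TVar i
              else if Nat.eqb i k then tlift_by k 0 C
              else TVar (pred i)
  | TConst a => TConst a
  | Arr B D => Arr (tsubst k C B) (tsubst k C D)
  | All B => All (tsubst (S k) C B)
  end.

Fixpoint ty_occurs (k : nat) (A : ty) : Prop :=
  match A with
  | TVar i => i = k
  | TConst _ => False
  | Arr B C => ty_occurs k B \/ ty_occurs k C
  | All B => ty_occurs (S k) B
  end.

Definition closed_ty (A : ty) : Prop := forall k, ~ ty_occurs k A.

Fixpoint has_const (c : nat) (A : ty) : Prop :=
  match A with
  | TVar _ => False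
  | TConst a => a = c
  | Arr B C => has_const c B \/ has_const c C
  | All B => has_const c B
  end.

Definition contains_O (A : ty) : Prop := has_const 0 A.

Fixpoint proper (A : ty) : Prop :=
  match A with
  | TVar _ | TConst _ => True
  | Arr B C => proper B /\ proper C
  | All B => ty_occurs 0 B /\ proper B
  end.

(** typing in system F (only proper types are used); the side condition
    "X not free in Γ" of (∀i) is built into the de Bruijn formulation *)
Inductive typing : list ty -> term -> ty -> Prop :=
| ty_ax : forall G i A, nth_error G i = Some A -> typing G (Var i) A
| ty_arr_i : forall G t B C, proper B -> typing (B :: G) t C ->
    typing G (Lam t) (Arr B C)
| ty_arr_e : forall G u v B C, typing G u (Arr B C) -> typing G v B ->
    typing G (App u v) C
| ty_all_i : forall G t A, typing (map tlift G) t A -> typing G t (All A)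
| ty_all_e : forall G t A C, proper C -> typing G t (All A) ->
    typing G t (tsubst 0 C A).

Definition saturated (X : term -> Prop) : Prop :=
  forall u t, X u -> wh_red t u -> X t.

Definition arrow_set (X Y : term -> Prop) : term -> Prop :=
  fun u => forall t, X t -> Y (App u t).

Definition scons (X : term -> Prop) (rho : nat -> term -> Prop) :
  nat -> term -> Prop :=
  fun n => match n with 0 => X | S m => rho m end.

Fixpoint interp (rho kappa : nat -> term -> Prop) (A : ty) : term -> Prop :=
  match A with
  | TVar i => rho i
  | TConst a => kappa a
  | Arr B C => arrow_set (interp rho kappa B) (interp rho kappa C)
  | All B => fun u => forall X, saturated X -> interp (scons X rho) kappa B u
  end.

Definition real (A : ty) (u : term) : Prop :=
  forall rho kappa : nat -> term -> Prop,
    (forall n, saturated (rho n)) -> (forall a, saturated (kappa a)) ->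
    interp rho kappa A u.

Definition data_type (A : ty) : Prop :=
  closed_ty A /\ (exists t, real A t) /\
  (forall t, real A t -> exists t', beta_star t t' /\ closed_term t').

(* context α : O is [O]; α is de Bruijn index 0 *)
Definition output_type (S : ty) : Prop :=
  closed_ty S /\ ~ contains_O S /\
  (forall t, normal t -> typing [O] t S -> ~ occurs 0 t).

(* Realizability: every term typable in a context realizes its type once the
   context variables are replaced by realizers (adequacy).  Interpret O by
   the set of all terms; then the variable α realizes O, so a term t with
   α : O ⊢ t : A lies in |A|_I for every I, since |A|_I does not depend on
   the value of O when A does not contain O.  Thus t ∈ |A|, and as A is a
   data type t β-reduces to a closed term; if t is normal that term is t
   itself, so α is not free in t. *)
From Stdlib Require Import List Arith Lia Relations RelationClasses.
Import ListNotations.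

Lemma lift_by_0 (t : term) (c : nat) : lift_by 0 c t = t.
Proof.
  revert c; induction t as [i|a IHa b IHb|a IHa]; intros c; simpl.
  - destruct (Nat.ltb_spec i c); f_equal; lia.
  - now rewrite IHa, IHb.
  - now rewrite IHa.
Qed.

Lemma subst_lift_by_1 (w : term) (k : nat) (u : term) :
  subst k u (lift_by 1 k w) = w.
Proof.
  revert k; induction w as [i|a IHa b IHb|a IHa]; intros k; simpl.
  - destruct (Nat.ltb_spec i k); simpl.
    + now destruct (Nat.ltb_spec i k); [|lia].
    + destruct (Nat.ltb_spec (i + 1) k), (Nat.eqb_spec (i + 1) k); try lia.
      f_equal; lia.
  - now rewrite IHa, IHb.
  - now rewrite IHa.
Qed.

Lemma lift_by_1_lift_by (u : term) (k d c : nat) : d <= c <= d + k ->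
  lift_by 1 c (lift_by k d u) = lift_by (S k) d u.
Proof.
  revert d c; induction u as [i|a IHa b IHb|a IHa]; intros d c Hc; simpl.
  - destruct (Nat.ltb_spec i d); simpl.
    + now destruct (Nat.ltb_spec i c); [|lia].
    + destruct (Nat.ltb_spec (i + k) c); [lia|]. f_equal; lia.
  - now rewrite IHa, IHb.
  - rewrite IHa; auto; lia.
Qed.

Lemma subst_lift_by_1_comm (w : term) (k c : nat) (u : term) : c <= k ->
  subst (S k) u (lift_by 1 c w) = lift_by 1 c (subst k u w).
Proof.
  revert k c; induction w as [i|a IHa b IHb|a IHa]; intros k c Hck; simpl.
  - destruct (Nat.ltb_spec i c); simpl.
    + destruct (Nat.ltb_spec i (S k)), (Nat.ltb_spec i k); try lia; simpl.
      now destruct (Nat.ltb_spec i c); [|lia].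
    + destruct (Nat.ltb_spec (i + 1) (S k)), (Nat.ltb_spec i k); try lia.
      * simpl. now destruct (Nat.ltb_spec i c); [lia|].
      * destruct (Nat.eqb_spec (i + 1) (S k)), (Nat.eqb_spec i k); try lia.
        -- rewrite lift_by_1_lift_by; auto; lia.
        -- simpl. destruct (Nat.ltb_spec (pred i) c); [lia|]. f_equal; lia.
  - now rewrite IHa, IHb.
  - rewrite IHa; auto; lia.
Qed.

Definition up (s : nat -> term) : nat -> term :=
  fun n => match n with 0 => Var 0 | S m => lift_by 1 0 (s m) end.

Definition tcons (u : term) (s : nat -> term) : nat -> term :=
  fun n => match n with 0 => u | S m => s m end.

Fixpoint psubst (s : nat -> term) (t : term) : term :=
  match t with
  | Var i => s i
  | App a b => App (psubst s a) (psubst s b)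
  | Lam a => Lam (psubst (up s) a)
  end.

Lemma psubst_ext (t : term) (s s' : nat -> term) :
  (forall i, s i = s' i) -> psubst s t = psubst s' t.
Proof.
  revert s s'; induction t as [i|a IHa b IHb|a IHa]; intros s s' Hs; simpl.
  - apply Hs.
  - now rewrite (IHa s s'), (IHb s s').
  - f_equal. apply IHa. intros [|i]; simpl; [reflexivity|now rewrite Hs].
Qed.

Lemma psubst_Var (t : term) : psubst Var t = t.
Proof.
  enough (H : forall s, (forall i, s i = Var i) -> psubst s t = t) by auto.
  induction t as [i|a IHa b IHb|a IHa]; intros s Hs; simpl.
  - apply Hs.
  - now rewrite IHa, IHb.
  - f_equal. apply IHa. intros [|i]; simpl; [reflexivity|].
    rewrite Hs. simpl. f_equal; lia.
Qed.

Lemma subst_psubst (t : term) (s : nat -> term) (k : nat) (u : term) :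
  subst k u (psubst s t) = psubst (fun i => subst k u (s i)) t.
Proof.
  revert s k; induction t as [i|a IHa b IHb|a IHa]; intros s k; simpl.
  - reflexivity.
  - now rewrite IHa, IHb.
  - f_equal. rewrite IHa. apply psubst_ext. intros [|i]; simpl; [reflexivity|].
    apply subst_lift_by_1_comm; lia.
Qed.

Lemma subst0_psubst_up (t : term) (s : nat -> term) (u : term) :
  subst 0 u (psubst (up s) t) = psubst (tcons u s) t.
Proof.
  rewrite subst_psubst. apply psubst_ext. intros [|i]; simpl.
  - apply lift_by_0.
  - apply subst_lift_by_1.
Qed.

Definition same_set (X Y : term -> Prop) : Prop := forall u, X u <-> Y u.

#[local] Instance same_set_equivalence : Equivalence same_set.
Proof. split; intros X *; firstorder. Qed.

Lemma interp_ext (A : ty) (rho rho' kappa kappa' : nat -> term -> Prop) :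
  (forall n, same_set (rho n) (rho' n)) ->
  (forall a, has_const a A -> same_set (kappa a) (kappa' a)) ->
  same_set (interp rho kappa A) (interp rho' kappa' A).
Proof.
  revert rho rho'; induction A as [i|a|B IHB C IHC|B IHB];
    intros rho rho' Hrho Hkappa u; simpl in *.
  - apply Hrho.
  - now apply Hkappa.
  - split; intros Hu t Ht;
      apply (IHC rho rho'), Hu, (IHB rho rho'); auto.
  - split; intros Hu X HX; apply (IHB (scons X rho) (scons X rho')); auto;
      intros [|n]; simpl; auto; intros v; reflexivity.
Qed.

Lemma interp_tlift_by (A : ty) (n c : nat) (rho kappa : nat -> term -> Prop) :
  same_set (interp rho kappa (tlift_by n c A))
    (interp (fun i => if i <? c then rho i else rho (i + n)) kappa A).
Proof.
  revert c rho; induction A as [i|a|B IHB C IHC|B IHB]; intros c rho u; simpl.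
  - destruct (i <? c); reflexivity.
  - reflexivity.
  - split; intros Hu t Ht; apply IHC, Hu, IHB, Ht.
  - enough (E : forall X, same_set
      (interp (fun i => if i <? S c then scons X rho i else scons X rho (i + n)) kappa B)
      (interp (scons X (fun i => if i <? c then rho i else rho (i + n))) kappa B)).
    { split; intros Hu X HX; apply E, IHB || apply IHB, E; auto. }
    intros X. apply interp_ext; [|intros; reflexivity].
    intros [|i] v; reflexivity.
Qed.

Lemma interp_tsubst (A : ty) (k : nat) (C : ty) (rho kappa : nat -> term -> Prop) :
  same_set (interp rho kappa (tsubst k C A))
    (interp (fun i => if i <? k then rho i
                      else if i =? k then interp (fun j => rho (j + k)) kappa C
                      else rho (pred i)) kappa A).
Proof.
  revert k rho; induction A as [i|a|B IHB D IHD|B IHB]; intros k rho u; simpl.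
  - destruct (i <? k); [reflexivity|]. destruct (i =? k); [|reflexivity].
    etransitivity; [apply interp_tlift_by|]. apply interp_ext; intros; reflexivity.
  - reflexivity.
  - split; intros Hu t Ht; apply IHD, Hu, IHB, Ht.
  - enough (E : forall X, same_set
      (interp (fun i => if i <? S k then scons X rho i
                        else if i =? S k then interp (fun j => scons X rho (j + S k)) kappa C
                        else scons X rho (pred i)) kappa B)
      (interp (scons X (fun i => if i <? k then rho i
                        else if i =? k then interp (fun j => rho (j + k)) kappa C
                        else rho (pred i))) kappa B)).
    { split; intros Hu X HX; apply E, IHB || apply IHB, E; auto. }
    intros X. apply interp_ext; [|intros; reflexivity].
    intros [|i] v; simpl; [reflexivity|].
    change (S i <? S k) with (i <? k); change (S i =? S k) with (i =? k).
    destruct (Nat.ltb_spec i k); [reflexivity|].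
    destruct (Nat.eqb_spec i k).
    + apply interp_ext; [|intros; reflexivity]. intros j w. now rewrite Nat.add_succ_r.
    + destruct i; [lia|reflexivity].
Qed.

Lemma interp_tsubst0 (A C : ty) (rho kappa : nat -> term -> Prop) :
  same_set (interp rho kappa (tsubst 0 C A))
    (interp (scons (interp rho kappa C) rho) kappa A).
Proof.
  intros u. etransitivity; [apply interp_tsubst|]. apply interp_ext; [|intros; reflexivity].
  intros [|i] v; simpl; [|reflexivity].
  apply interp_ext; [|intros; reflexivity]. intros j w. now rewrite Nat.add_0_r.
Qed.

Lemma interp_tlift (A : ty) (X : term -> Prop) (rho kappa : nat -> term -> Prop) :
  same_set (interp (scons X rho) kappa (tlift A)) (interp rho kappa A).
Proof.
  intros u. unfold tlift. etransitivity; [apply interp_tlift_by|].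
  apply interp_ext; [|intros; reflexivity]. intros i v. now rewrite Nat.add_1_r.
Qed.

Lemma wh_red_app (t u v : term) : wh_red t u -> wh_red (App t v) (App u v).
Proof.
  induction 1.
  - now apply rt_step, wh_app.
  - apply rt_refl.
  - eapply rt_trans; eauto.
Qed.

Lemma interp_saturated (A : ty) (rho kappa : nat -> term -> Prop) :
  (forall n, saturated (rho n)) -> (forall a, saturated (kappa a)) ->
  saturated (interp rho kappa A).
Proof.
  revert rho; induction A as [i|a|B IHB C IHC|B IHB]; intros rho Hrho Hkappa; simpl.
  - apply Hrho.
  - apply Hkappa.
  - intros u t Hu Htu v Hv. eapply IHC; eauto using wh_red_app.
  - intros u t Hu Htu X HX. eapply IHB; eauto. intros [|n]; simpl; auto.
Qed.

Lemma adequacy (G : list ty) (t : term) (A : ty) : typing G t A ->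
  forall rho kappa : nat -> term -> Prop,
  (forall n, saturated (rho n)) -> (forall a, saturated (kappa a)) ->
  forall s, (forall i B, nth_error G i = Some B -> interp rho kappa B (s i)) ->
  interp rho kappa A (psubst s t).
Proof.
  induction 1 as [G i A Hi|G t B C _ _ IH|G u v B C _ IHu _ IHv
                 |G t A _ IH|G t A C _ _ IH];
    intros rho kappa Hrho Hkappa s Hs; simpl.
  - now apply Hs.
  - intros v Hv.
    apply (interp_saturated C rho kappa Hrho Hkappa (subst 0 v (psubst (up s) t))).
    + rewrite subst0_psubst_up. apply IH; auto.
      intros [|i] B' Hi; simpl in *; [now injection Hi as <-|auto].
    + apply rt_step, wh_redex.
  - now apply IHu, IHv.
  - intros X HX. apply IH; auto.
    + intros [|n]; simpl; auto.
    + intros i B Hi. rewrite nth_error_map in Hi.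
      destruct (nth_error G i) eqn:E; simpl in Hi; inversion Hi; subst.
      apply interp_tlift. auto.
  - apply interp_tsubst0, IH; auto using interp_saturated.
Qed.

Lemma beta1_has_redex (t t' : term) : beta1 t t' -> has_redex t.
Proof.
  induction 1 as [| a a' b _ IH | a b b' _ IH | a a' _ IH]; simpl; auto;
    destruct a; simpl in *; auto.
Qed.

Lemma beta_star_normal (t t' : term) : beta_star t t' -> normal t -> t' = t.
Proof.
  induction 1 as [x y Hxy| x | x y z _ IHxy _ IHyz]; intros Hn; auto.
  - contradiction (Hn (beta1_has_redex _ _ Hxy)).
  - assert (y = x) by auto. subst. auto.
Qed.

Definition kappa_full_at_O (kappa : nat -> term -> Prop) : nat -> term -> Prop :=
  fun a => if a =? 0 then fun _ => True else kappa a.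

Lemma typing_O_real (t : term) (A : ty) :
  ~ contains_O A -> typing [O] t A -> real A t.
Proof.
  intros HO Ht rho kappa Hrho Hkappa.
  assert (Hfull : forall a, saturated (kappa_full_at_O kappa a)).
  { intros [|a]; simpl; [now intros|apply Hkappa]. }
  apply (interp_ext A rho rho (kappa_full_at_O kappa) kappa); [reflexivity| |].
  { intros [|a] Ha; [contradiction|reflexivity]. }
  rewrite <- (psubst_Var t).
  apply (adequacy _ _ _ Ht); auto.
  intros [|[|i]] B Hi; inversion Hi; subst. exact I.
Qed.

Theorem theorem2p1p8 (A : ty) :
  proper A -> closed_ty A -> ~ contains_O A -> data_type A -> output_type A.
Proof.
  intros _ Hclosed HO [_ [_ Hdata]].
  split; [exact Hclosed|split; [exact HO|]].
  intros t Hnormal Ht Hocc.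
  destruct (Hdata t (typing_O_real t A HO Ht)) as [t' [Hred Ht']].
  rewrite (beta_star_normal _ _ Hred Hnormal) in Ht'.
  exact (Ht' 0 Hocc).
Qed.
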